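(* Let $M$ be a real $4$-dimensional manifold with local coordinates $q^1,\dots,q^4$, and write $\phi_{\mu\nu}=\partial_{q^\mu}\partial_{q^\nu}\phi$. None of the following Monge–Ampère equations for a real function $\phi$ corresponds to the variational problem of a first-order Lagrangian function $L(q^\mu,\phi,\phi_\mu)$ (i.e. none of them is, up to multiplication by a non-vanishing function, the Euler–Lagrange equation of such an $L$): (1) first Plebański heavenly equation $\phi_{13}\phi_{24}-\phi_{14}\phi_{23}=1$; (2) second Plebański heavenly equation $\phi_{11}\phi_{22}-(\phi_{12})^2+\phi_{13}+\phi_{24}=0$; (3) Grant equation $\phi_{11}+\phi_{24}\phi_{13}-\phi_{23}\phi_{14}=0$; (4) Husain equation $\phi_{13}\phi_{24}-\phi_{14}\phi_{23}+\phi_{11}+\phi_{22}=0$.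
   Context: A first-order Lagrangian function is a smooth function $L(q^\mu,\phi,\phi_\mu)$ of the coordinates, the field and its first derivatives $\phi_\mu=\partial_{q^\mu}\phi$; its Euler–Lagrange equation is $\frac{\partial L}{\partial\phi}-\frac{\partial}{\partial q^\mu}\frac{\partial L}{\partial\phi_\mu}=0$. *)

From HB Require Import structures.
From mathcomp Require Import all_boot all_order all_algebra.
From mathcomp Require Import all_classical all_reals all_analysis.
Set Implicit Arguments. Unset Strict Implicit. Unset Printing Implicit Defensive.
Import Order.TTheory GRing.Theory Num.Theory.
Import numFieldNormedType.Exports.
Local Open Scope classical_set_scope.
Local Open Scope ring_scope.

Section Defs.
Variable R : realType.

(* Coordinates q = (q^1,..,q^4) are points of 'rV[R]_4 ; index mu : 'I_4
   (mathematical index mu+1). *)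
Definition coord (mu : 'I_4) : 'rV[R]_4 := delta_mx 0 mu.

Definition jet1 := ('rV[R]_4 * R * 'rV[R]_4)%type.
Definition jet2 := ('rV[R]_4 * R * 'rV[R]_4 * 'M[R]_4)%type.

Fixpoint iterD {V : normedModType R} (vs : seq V) (f : V -> R) : V -> R :=
  match vs with
  | [::] => f
  | v :: vs' => 'D_v (iterD vs' f)
  end.

Definition smooth_on {V : normedModType R} (D : set V) (f : V -> R) : Prop :=
  forall (vs : seq V) (x : V), D x ->
    (forall v : V, derivable (iterD vs f) x v) /\ {for x, continuous (iterD vs f)}.

Definition smooth {V : normedModType R} (f : V -> R) : Prop := smooth_on setT f.

Definition grad (phi : 'rV[R]_4 -> R) (q : 'rV[R]_4) : 'rV[R]_4 :=
  \row_mu 'D_(coord mu) phi q.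

Definition hess (phi : 'rV[R]_4 -> R) (q : 'rV[R]_4) : 'M[R]_4 :=
  \matrix_(mu, nu) 'D_(coord mu) ('D_(coord nu) phi) q.

Definition jet1_of (phi : 'rV[R]_4 -> R) (q : 'rV[R]_4) : jet1 :=
  (q, phi q, grad phi q).
Definition jet2_of (phi : 'rV[R]_4 -> R) (q : 'rV[R]_4) : jet2 :=
  (q, phi q, grad phi q, hess phi q).

Definition dL_dphi (L : jet1 -> R) (x : jet1) : R :=
  'D_((0 : 'rV[R]_4), (1 : R), (0 : 'rV[R]_4)) L x.
Definition dL_dphimu (L : jet1 -> R) (mu : 'I_4) (x : jet1) : R :=
  'D_((0 : 'rV[R]_4), (0 : R), coord mu) L x.

Definition euler_lagrange (L : jet1 -> R) (phi : 'rV[R]_4 -> R) (q : 'rV[R]_4) : R :=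
  dL_dphi L (jet1_of phi q)
  - \sum_(mu < 4) 'D_(coord mu) (fun q' => dL_dphimu L mu (jet1_of phi q')) q.

Definition variational_on (U : set 'rV[R]_4) (F : jet2 -> R) : Prop :=
  exists (L : jet1 -> R) (lam : jet2 -> R),
    smooth_on [set x : jet1 | U x.1.1] L /\
    (forall x : jet2, U x.1.1.1 -> lam x != 0) /\
    (forall phi : 'rV[R]_4 -> R, smooth phi ->
       forall q, U q -> euler_lagrange L phi q = lam (jet2_of phi q) * F (jet2_of phi q)).

(* The four Monge-Ampere equations, written as F = 0.
   Matrix index i stands for the paper's index i+1. *)
Definition hess_of (x : jet2) : 'M[R]_4 := x.2.

Definition plebanski1 (x : jet2) : R :=
  let H := hess_of x in H 0 2%:R * H 1 3%:R - H 0 3%:R * H 1 2%:R - 1.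
Definition plebanski2 (x : jet2) : R :=
  let H := hess_of x in H 0 0 * H 1 1 - (H 0 1) ^+ 2 + H 0 2%:R + H 1 3%:R.
Definition grant (x : jet2) : R :=
  let H := hess_of x in H 0 0 + H 1 3%:R * H 0 2%:R - H 1 2%:R * H 0 3%:R.
Definition husain (x : jet2) : R :=
  let H := hess_of x in H 0 2%:R * H 1 3%:R - H 0 3%:R * H 1 2%:R + H 0 0 + H 1 1.

End Defs.

(* The Euler-Lagrange expression of a first-order Lagrangian is affine in the
   second derivatives of phi.  Probe it with the quadratic polynomials
   phi_N(q) = (q - q0) N (q - q0)^T, N with zero diagonal: phi_N vanishes on the
   coordinate lines through q0, so along them its 1-jet moves affinely, with a
   velocity linear in N.  Since directional derivatives of a C^1 function are
   additive in the direction, at q0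
     EL(phi_N1) + EL(phi_N2) = EL(phi_(N1+N2)) + EL(phi_0).
   If EL = lam F with lam nonvanishing and F vanishes at the Hessians N1 + N1^T
   and N2 + N2^T, then F vanishes at (N1+N2) + (N1+N2)^T iff it vanishes at 0.
   For each of the four equations explicit N1, N2 violate this. *)

From Pilot Require Import Defs.
From HB Require Import structures.
From mathcomp Require Import all_boot all_order all_algebra.
From mathcomp Require Import all_classical all_reals all_analysis.
From mathcomp Require Import ring lra.
Import Order.TTheory GRing.Theory Num.Theory.
Import numFieldNormedType.Exports.
Local Open Scope classical_set_scope.
Local Open Scope ring_scope.
Set Implicit Arguments.
Unset Strict Implicit.
Unset Printing Implicit Defensive.

Section PolynomialFunctions.
Variables (R : realType) (n : nat).
Implicit Types (f g : 'rV[R]_n -> R) (x v : 'rV[R]_n).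

Inductive polyfun : ('rV[R]_n -> R) -> Prop :=
| polyfun_cst c : polyfun (fun _ => c)
| polyfun_coord i : polyfun (fun q => q 0 i)
| polyfunD f g : polyfun f -> polyfun g -> polyfun (fun q => f q + g q)
| polyfunM f g : polyfun f -> polyfun g -> polyfun (fun q => f q * g q).

Lemma polyfun_sum m (F : 'I_m -> 'rV[R]_n -> R) :
  (forall i, polyfun (F i)) -> polyfun (fun q => \sum_(i < m) F i q).
Proof.
move=> polyF; rewrite -fct_sumE.
by apply: big_ind => //; [exact: (polyfun_cst 0) | exact: polyfunD].
Qed.

Lemma derive_coord i x v : 'D_v (fun q : 'rV[R]_n => q 0 i) x = v 0 i.
Proof.
rewrite /derive; apply: lim_near_cst => //; near=> h.
have h_neq0 : h != 0 by near: h; exact: nbhs_dnbhs_neq.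
by rewrite /= !mxE addrK scalerA mulVf // scale1r.
Unshelve. all: by end_near. Qed.

Lemma polyfun_derivable f x v : polyfun f -> derivable f x v.
Proof.
elim=> [c|i|f1 f2 _ d1 _ d2|f1 f2 _ d1 _ d2].
- exact: derivable_cst.
- exact/diff_derivable/differentiable_coord.
- exact: derivableD.
- exact: derivableM.
Qed.

Lemma polyfun_continuous f : polyfun f -> continuous f.
Proof.
elim=> [c|i|f1 f2 _ c1 _ c2|f1 f2 _ c1 _ c2] x.
- exact: cst_continuous.
- exact: coord_continuous.
- exact: (continuousD (c1 x) (c2 x)).
- exact: (continuousM (c1 x) (c2 x)).
Qed.

Lemma polyfun_derive f v : polyfun f -> polyfun ('D_v f).
Proof.
elim=> [c|i|f1 f2 p1 dp1 p2 dp2|f1 f2 p1 dp1 p2 dp2].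
- rewrite (_ : 'D_v _ = fun=> 0); first exact: polyfun_cst.
  by apply: funext => x; exact: derive_cst.
- rewrite (_ : 'D_v _ = fun=> v 0 i); first exact: polyfun_cst.
  by apply: funext => x; exact: derive_coord.
- rewrite (_ : 'D_v _ = fun x => 'D_v f1 x + 'D_v f2 x); first exact: polyfunD.
  by apply: funext => x; apply: deriveD; exact: polyfun_derivable.
- rewrite (_ : 'D_v _ = fun x => f1 x * 'D_v f2 x + f2 x * 'D_v f1 x).
    by apply: polyfunD; exact: polyfunM.
  by apply: funext => x; apply: deriveM; exact: polyfun_derivable.
Qed.

Lemma polyfun_smooth f : polyfun f -> smooth f.
Proof.
move=> pf vs x _; have pvs : polyfun (Defs.iterD vs f).
  by elim: vs => [|w vs IH] //=; exact: polyfun_derive.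
by split; [move=> v; exact: polyfun_derivable | exact: polyfun_continuous].
Qed.

Lemma derive_sum_polyfun m (F : 'I_m -> 'rV[R]_n -> R) x v :
  (forall i, polyfun (F i)) ->
  'D_v (fun q => \sum_(i < m) F i q) x = \sum_(i < m) 'D_v (F i) x.
Proof.
move=> polyF; rewrite -fct_sumE derive_sum // => i.
exact: polyfun_derivable.
Qed.

End PolynomialFunctions.

Section DirectionalDerivatives.
Variable R : realType.

Lemma derive_comp_affine (V W Z : normedModType R) (f : V -> W) (G : W -> Z)
    (x v : V) (w : W) :
  (forall h : R, f (h *: v + x) = h *: w + f x) -> 'D_v (G \o f) x = 'D_w G (f x).
Proof.
move=> f_line; rewrite /derive.
suff -> : (fun h : R => h^-1 *: ((G \o f \o shift x) (h *: v) - (G \o f) x)) =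
    (fun h : R => h^-1 *: ((G \o shift (f x)) (h *: w) - G (f x))) by [].
by apply: funext => h /=; rewrite f_line.
Qed.

Lemma MVT_from0 (f df : R -> R) (h : R) :
  (forall t : R, `|t| <= `|h| -> is_derive t (1 : R) f (df t)) ->
  exists2 c, `|c| <= `|h| & f h - f 0 = df c * h.
Proof.
move=> fdf.
have MVT_in a b : a <= b -> {in `[a, b], forall t, `|t| <= `|h|} ->
    exists2 c, `|c| <= `|h| & f b - f a = df c * (b - a).
  move=> le_ab ab_h.
  have df_ab t : t \in `[a, b] -> is_derive t (1 : R) f (df t) by move/ab_h; exact: fdf.
  have f_cont : {within `[a, b], continuous f}.
    by apply: derivable_within_continuous => t /df_ab dft; exact: ex_derive.
  have [c /ab_h ? ->] :=
    MVT_segment le_ab (fun t tab => df_ab t (subset_itv_oo_cc tab)) f_cont.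
  by exists c.
have [h_ge0|h_lt0] := leP 0 h.
- have [|c ? E] := MVT_in 0 h h_ge0; last by exists c; rewrite // E subr0.
  move=> t; rewrite in_itv /= => /andP[t0 th].
  by rewrite !ger0_norm.
- have [|c ? E] := MVT_in h 0 (ltW h_lt0); last first.
    by exists c => //; apply: oppr_inj; rewrite opprB E; ring.
  move=> t; rewrite in_itv /= => /andP[ht t0].
  by rewrite !ler0_norm ?lerN2 // ltW.
Qed.

Lemma is_derive_line (V : normedModType R) (G : V -> R) (b z : V) (s : R) :
  derivable G (s *: b + z) b ->
  is_derive s (1 : R) (fun t : R => G (t *: b + z)) ('D_b G (s *: b + z)).
Proof.
move=> dG.
have quotE : (fun h : R => h^-1 *: (((fun t : R => G (t *: b + z)) \o shift s) (h *: 1)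
      - G (s *: b + z))) =
    (fun h : R => h^-1 *: ((G \o shift (s *: b + z)) (h *: b) - G (s *: b + z))).
  by apply: funext => h /=; rewrite [h *: 1]mulr1 scalerDl addrA.
by split; [rewrite /derivable quotE | rewrite /derive quotE].
Qed.

Lemma cvg_derive_shifted (V : normedModType R) (G : V -> R) (x a b : V) :
  (\forall y \near x, derivable G y b) -> {for x, continuous ('D_b G)} ->
  (fun h : R => h^-1 *: (G (h *: b + (h *: a + x)) - G (h *: a + x))) @ 0^'
    --> 'D_b G x.
Proof.
move=> dG DG_cont; apply/cvgrPdist_lt => eps eps_gt0.
have /nbhs_normP[d /= d_gt0 near_x] :
    \forall y \near x, derivable G y b /\ `|'D_b G x - 'D_b G y| < eps.
  near=> y; split; first by near: y.
  by near: y; move/cvgrPdist_lt: DG_cont; apply.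
set k := `|a| + `|b| + 1.
have k_gt0 : 0 < k by rewrite /k; have := normr_ge0 a; have := normr_ge0 b; lra.
near=> h.
have h_neq0 : h != 0 by near: h; exact: nbhs_dnbhs_neq.
have h_small : `|h| * k < d.
  by rewrite -ltr_pdivlMr //; near: h; apply: dnbhs0_lt; exact: divr_gt0.
have near_line t : `|t| <= `|h| -> derivable G (t *: b + (h *: a + x)) b /\
    `|'D_b G x - 'D_b G (t *: b + (h *: a + x))| < eps.
  move=> t_h; apply: near_x => /=.
  rewrite -normrN opprB addrA addrK.
  apply: (le_lt_trans (ler_normD _ _)); rewrite !normrZ.
  have := normr_ge0 a; have := normr_ge0 b; have := normr_ge0 t.
  move: h_small; rewrite /k; nra.
have [c c_h] := MVT_from0 (fun t t_h => is_derive_line (near_line t t_h).1).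
rewrite scale0r add0r => ->; rewrite [_ *: _]mulrC -mulrA mulfV // mulr1.
exact: (near_line c c_h).2.
Unshelve. all: by end_near. Qed.

Lemma derive_dirD (V : normedModType R) (G : V -> R) (x a b : V) :
  (\forall y \near x, derivable G y b) -> {for x, continuous ('D_b G)} ->
  derivable G x a -> 'D_(a + b) G x = 'D_a G x + 'D_b G x.
Proof.
move=> dG DG_cont dGa; rewrite /derive; apply: cvg_lim => //.
suff -> : (fun h : R => h^-1 *: ((G \o shift x) (h *: (a + b)) - G x)) =
    (fun h : R => h^-1 *: ((G \o shift x) (h *: a) - G x)) \+
    (fun h : R => h^-1 *: (G (h *: b + (h *: a + x)) - G (h *: a + x))).
  exact: cvgD dGa (cvg_derive_shifted a dG DG_cont).
apply: funext => h /=.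
have -> : h *: (a + b) + x = h *: b + (h *: a + x) by rewrite scalerDr -addrA addrCA.
by rewrite [in RHS]addrC -scalerDr subrKA.
Qed.

End DirectionalDerivatives.

Section HollowMatrices.
Variables (R : pzRingType) (n : nat).
Implicit Types (N : 'M[R]_n) (i j : 'I_n).

Definition hollow N := forall i, N i i = 0.

Lemma hollow0 : hollow 0.
Proof. by move=> i; rewrite mxE. Qed.

Lemma hollowD N1 N2 : hollow N1 -> hollow N2 -> hollow (N1 + N2).
Proof. by move=> h1 h2 i; rewrite mxE h1 h2 addr0. Qed.

Lemma hollowB N1 N2 : hollow N1 -> hollow N2 -> hollow (N1 - N2).
Proof. by move=> h1 h2 i; rewrite !mxE h1 h2 subr0. Qed.

Lemma hollow_delta i j : i != j -> hollow (delta_mx i j).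
Proof. by move=> /negbTE ij k; rewrite mxE; case: eqP => // ->; rewrite ij. Qed.

End HollowMatrices.

Section QuadraticProbe.
Variables (R : realType) (q0 : 'rV[R]_4).
Local Notation e := (Defs.coord R).
Implicit Types (N : 'M[R]_4) (q x v : 'rV[R]_4) (i j mu nu : 'I_4) (h : R).

Definition disp i q := q 0 i - q0 0 i.
Definition probe N q := \sum_i \sum_j N i j * (disp i q * disp j q).
Definition probe_partial N nu q := \sum_i (N i nu + N nu i) * disp i q.

Lemma sum_mul_coord (F : 'I_4 -> R) mu : \sum_j F j * e mu 0 j = F mu.
Proof.
rewrite (bigD1 mu) //= big1 => [|j /negbTE j_mu]; rewrite mxE eqxx /=.
  by rewrite eqxx mulr1 addr0.
by rewrite j_mu mulr0.
Qed.

Lemma polyfun_disp i : polyfun (disp i).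
Proof. by apply: polyfunD; [exact: polyfun_coord | exact: polyfun_cst]. Qed.

Lemma derive_disp i x v : 'D_v (disp i) x = v 0 i.
Proof.
rewrite (_ : disp i = (fun q => q 0 i) - cst (q0 0 i)) // deriveB.
- by rewrite derive_coord derive_cst subr0.
- exact/polyfun_derivable/polyfun_coord.
- exact: derivable_cst.
Qed.

Lemma derive_lincomb_disp (c : 'I_4 -> R) x v :
  'D_v (fun q => \sum_i c i * disp i q) x = \sum_i c i * v 0 i.
Proof.
rewrite derive_sum_polyfun => [|i]; last exact/polyfunM/polyfun_disp/polyfun_cst.
apply: eq_bigr => i _; rewrite deriveMl ?derive_disp //.
exact/polyfun_derivable/polyfun_disp.
Qed.

Lemma polyfun_probe_term N i j : polyfun (fun q => N i j * (disp i q * disp j q)).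
Proof. by apply/polyfunM/polyfunM; [exact: polyfun_cst | exact: polyfun_disp..]. Qed.

Lemma polyfun_probe N : polyfun (probe N).
Proof. by apply: polyfun_sum => i; apply: polyfun_sum; exact: polyfun_probe_term. Qed.

Lemma derive_probe N nu x : 'D_(e nu) (probe N) x = probe_partial N nu x.
Proof.
have ddisp i : derivable (disp i) x (e nu) by exact/polyfun_derivable/polyfun_disp.
rewrite derive_sum_polyfun => [|i]; last exact/polyfun_sum/polyfun_probe_term.
transitivity (\sum_i \sum_j (N i j * disp i x * e nu 0 j + N i j * disp j x * e nu 0 i)).
  apply: eq_bigr => i _; rewrite derive_sum_polyfun => [|j]; last first.
    exact: polyfun_probe_term.
  apply: eq_bigr => j _; rewrite deriveMl; last exact: derivableM.
  rewrite deriveM // !derive_disp -![_ *: _]/(_ * _); ring.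
under eq_bigr do rewrite big_split /= sum_mul_coord -mulr_suml.
rewrite big_split /= sum_mul_coord /probe_partial -big_split /=.
by apply: eq_bigr => i _; rewrite mulrDl.
Qed.

Lemma derive_probe_partial N mu nu x :
  'D_(e mu) (probe_partial N nu) x = N mu nu + N nu mu.
Proof. by rewrite derive_lincomb_disp sum_mul_coord. Qed.

Lemma grad_probe N q : grad (probe N) q = \row_nu probe_partial N nu q.
Proof. by apply/rowP => nu; rewrite !mxE derive_probe. Qed.

Lemma hess_probe N q : hess (probe N) q = N + N^T.
Proof.
apply/matrixP => mu nu; rewrite !mxE.
rewrite (_ : 'D_(e nu) (probe N) = probe_partial N nu); last first.
  by apply: funext => y; exact: derive_probe.
exact: derive_probe_partial.
Qed.

Lemma disp_line mu h i : disp i (h *: e mu + q0) = h * e mu 0 i.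
Proof. by rewrite /disp !mxE addrK. Qed.

Lemma probe_line N mu h : hollow N -> probe N (h *: e mu + q0) = 0.
Proof.
move=> N_hollow; rewrite /probe.
under eq_bigr do under eq_bigr do rewrite !disp_line.
transitivity (h * h * \sum_i (\sum_j N i j * e mu 0 j) * e mu 0 i).
  rewrite mulr_sumr; apply: eq_bigr => i _; rewrite mulr_suml mulr_sumr.
  by apply: eq_bigr => j _; ring.
by rewrite sum_mul_coord sum_mul_coord N_hollow mulr0.
Qed.

Lemma probe_partial_line N nu mu h :
  probe_partial N nu (h *: e mu + q0) = h * (N mu nu + N nu mu).
Proof.
rewrite /probe_partial; under eq_bigr do rewrite disp_line mulrCA.
by rewrite -mulr_sumr sum_mul_coord.
Qed.

Lemma disp_base i : disp i q0 = 0.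
Proof. exact: subrr. Qed.

Definition base_jet : jet1 R := (q0, 0, 0).

Lemma jet1_probe_base N : jet1_of (probe N) q0 = base_jet.
Proof.
rewrite /jet1_of grad_probe /probe /probe_partial; congr (_, _, _).
- by rewrite big1 // => i _; rewrite big1 // => j _; rewrite !disp_base !mul0r mulr0.
- by apply/rowP => nu; rewrite !mxE big1 // => i _; rewrite disp_base mulr0.
Qed.

Lemma jet1_probe_line N mu h : hollow N ->
  jet1_of (probe N) (h *: e mu + q0) = h *: (e mu, 0, row mu (N + N^T)) + base_jet.
Proof.
move=> N_hollow; rewrite /jet1_of probe_line // grad_probe; congr (_, _, _).
- by rewrite /= scaler0 addr0.
- by apply/rowP => nu; rewrite /= !mxE probe_partial_line addr0.
Qed.

End QuadraticProbe.

Section EulerLagrangeOfProbes.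
Variables (R : realType) (U : set 'rV[R]_4) (q0 : 'rV[R]_4) (L : jet1 R -> R).
Hypotheses (U_open : open U) (U_q0 : U q0).
Hypothesis L_smooth : smooth_on [set x : jet1 R | U x.1.1] L.
Local Notation e := (Defs.coord R).
Local Notation x0 := (base_jet q0).
Implicit Types (N : 'M[R]_4) (mu : 'I_4).

Lemma near_base_jet : \forall y \near x0, U y.1.1.
Proof.
have U_nbhs : nbhs q0 U by exact: open_nbhs_nbhs.
exact: (cvg_comp _ _ cvg_fst cvg_fst).
Qed.

Lemma derive_dL_dphimuD mu (a b : jet1 R) :
  'D_(a + b) (dL_dphimu L mu) x0 =
  'D_a (dL_dphimu L mu) x0 + 'D_b (dL_dphimu L mu) x0.
Proof.
have phimu_smooth vs := L_smooth (vs ++ [:: ((0 : 'rV[R]_4), (0 : R), e mu)]).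
apply: derive_dirD.
- by apply: filterS near_base_jet => y /(phimu_smooth [::]) [].
- exact: (phimu_smooth [:: b] x0 U_q0).2.
- exact: (phimu_smooth [::] x0 U_q0).1.
Qed.

Definition el_hess_term N := \sum_mu
  'D_(((0 : 'rV[R]_4), (0 : R), row mu (N + N^T)) : jet1 R) (dL_dphimu L mu) x0.

Lemma euler_lagrange_probe N : hollow N ->
  euler_lagrange L (probe q0 N) q0 =
  dL_dphi L x0 - \sum_mu 'D_((e mu, (0 : R), (0 : 'rV[R]_4)) : jet1 R) (dL_dphimu L mu) x0
  - el_hess_term N.
Proof.
move=> N_hollow; rewrite /euler_lagrange jet1_probe_base -addrA -opprD -big_split /=.
congr (_ - _); apply: eq_bigr => mu _.
have probe_line h : jet1_of (probe q0 N) (h *: e mu + q0) =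
    h *: (e mu, 0, row mu (N + N^T)) + jet1_of (probe q0 N) q0.
  by rewrite jet1_probe_base jet1_probe_line.
rewrite (derive_comp_affine _ probe_line) jet1_probe_base -derive_dL_dphimuD.
by congr ('D_(_) _ _); congr (_, _, _); rewrite /= ?addr0 ?add0r.
Qed.

Lemma el_hess_termD N1 N2 : el_hess_term (N1 + N2) = el_hess_term N1 + el_hess_term N2.
Proof.
rewrite /el_hess_term -big_split; apply: eq_bigr => mu _ /=.
rewrite -derive_dL_dphimuD; congr ('D_(_) _ _); congr (_, _, _); rewrite /= ?addr0 //.
by apply/rowP => nu; rewrite !mxE addrACA.
Qed.

Lemma el_hess_term0 : el_hess_term 0 = 0.
Proof.
rewrite /el_hess_term big1 // => mu _; rewrite trmx0 addr0 row0.
exact: derive0.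
Qed.

Lemma euler_lagrange_probe_affine N1 N2 : hollow N1 -> hollow N2 ->
  euler_lagrange L (probe q0 N1) q0 + euler_lagrange L (probe q0 N2) q0 =
  euler_lagrange L (probe q0 (N1 + N2)) q0 + euler_lagrange L (probe q0 0) q0.
Proof.
move=> h1 h2; rewrite (euler_lagrange_probe h1) (euler_lagrange_probe h2).
rewrite (euler_lagrange_probe (hollowD h1 h2)) (euler_lagrange_probe (@hollow0 _ _)).
rewrite el_hess_termD el_hess_term0.
by move: (el_hess_term N1) (el_hess_term N2) (dL_dphi L x0) => s1 s2 d; ring.
Qed.

End EulerLagrangeOfProbes.

Lemma eq_of_weighted_sum_eq0 (R : idomainType) (a1 a2 a3 a4 c1 c2 c3 c4 : R) :
  a1 * c1 + a2 * c2 = a3 * c3 + a4 * c4 -> c1 = 0 -> c2 = 0 ->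
  a3 != 0 -> a4 != 0 -> c3 * c4 = 0 -> c3 = c4.
Proof.
move=> E c1_0 c2_0 a3_neq0 a4_neq0 /eqP; rewrite mulf_eq0.
move: E; rewrite c1_0 c2_0 !mulr0 addr0 => /esym E.
case/orP=> /eqP c_0; move: E; rewrite c_0 mulr0 ?add0r ?addr0 => /eqP;
  by rewrite mulf_eq0 ?(negbTE a3_neq0) ?(negbTE a4_neq0) => /eqP ->.
Qed.

Definition hess_jet (R : realType) (H : 'M[R]_4) : jet2 R := (0, 0, 0, H).

Lemma not_variational_on (R : realType) (U : set 'rV[R]_4) (F : jet2 R -> R)
    (N1 N2 : 'M[R]_4) :
  open U -> U !=set0 -> hollow N1 -> hollow N2 ->
  (forall x, F x = F (hess_jet (hess_of x))) ->
  F (hess_jet (N1 + N1^T)) = 0 -> F (hess_jet (N2 + N2^T)) = 0 ->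
  F (hess_jet ((N1 + N2) + (N1 + N2)^T)) * F (hess_jet 0) = 0 ->
  F (hess_jet ((N1 + N2) + (N1 + N2)^T)) != F (hess_jet 0) ->
  ~ variational_on U F.
Proof.
move=> U_open [q0 U_q0] h1 h2 F_hess F1 F2 F_prod F_neq.
case=> L [lam [L_smooth [lam_neq0 EL_eq]]].
have F_probe N : F (jet2_of (probe q0 N) q0) = F (hess_jet (N + N^T)).
  by rewrite F_hess /hess_of /= hess_probe.
have EL_probe N : euler_lagrange L (probe q0 N) q0 =
    lam (jet2_of (probe q0 N) q0) * F (hess_jet (N + N^T)).
  by rewrite (EL_eq _ (polyfun_smooth (polyfun_probe q0 N)) _ U_q0) F_probe.
have lam_probe_neq0 N : lam (jet2_of (probe q0 N) q0) != 0 := lam_neq0 (jet2_of _ q0) U_q0.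
have := euler_lagrange_probe_affine U_open U_q0 L_smooth h1 h2.
rewrite !EL_probe => /eq_of_weighted_sum_eq0.
move=> /(_ F1 F2 (lam_probe_neq0 _) (lam_probe_neq0 _)).
by rewrite trmx0 addr0 => /(_ F_prod) /eqP; rewrite (negbTE F_neq).
Qed.

Section MongeAmpereEquations.
Variables (R : realType) (U : set 'rV[R]_4).
Hypotheses (U_open : open U) (U_neq0 : U !=set0).
Local Notation E i j := (delta_mx i j : 'M[R]_4).

Lemma plebanski1_not_variational : ~ variational_on U (@plebanski1 R).
Proof.
apply: (@not_variational_on _ _ _ (E 0 2%:R + E 1 3%:R)
  (E 0 3%:R - E 1 3%:R - E 1 2%:R)) => //.
- by apply: hollowD; exact: hollow_delta.
- by apply: hollowB; [apply: hollowB|]; exact: hollow_delta.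
all: rewrite /plebanski1 /hess_of /= !mxE /=; first [ring | apply/eqP; lra].
Qed.

Lemma plebanski2_not_variational : ~ variational_on U (@plebanski2 R).
Proof.
apply: (@not_variational_on _ _ _ (E 0 1 + E 0 2%:R) (E 0 2%:R - E 0 1)) => //.
- by apply: hollowD; exact: hollow_delta.
- by apply: hollowB; exact: hollow_delta.
all: rewrite /plebanski2 /hess_of /= !mxE /=; first [ring | apply/eqP; lra].
Qed.

Lemma grant_not_variational : ~ variational_on U (@grant R).
Proof.
apply: (@not_variational_on _ _ _ (E 1 3%:R) (E 0 2%:R)) => //; try exact: hollow_delta.
all: rewrite /grant /hess_of /= !mxE /=; first [ring | apply/eqP; lra].
Qed.

Lemma husain_not_variational : ~ variational_on U (@husain R).
Proof.
apply: (@not_variational_on _ _ _ (E 1 3%:R) (E 0 2%:R)) => //; try exact: hollow_delta.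
all: rewrite /husain /hess_of /= !mxE /=; first [ring | apply/eqP; lra].
Qed.

End MongeAmpereEquations.

Theorem mainTheorem6 (R : realType) (U : set 'rV[R]_4) :
  open U -> U !=set0 ->
  [/\ ~ variational_on U (@plebanski1 R),
      ~ variational_on U (@plebanski2 R),
      ~ variational_on U (@grant R)
    & ~ variational_on U (@husain R)].
Proof.
move=> U_open U_neq0; split.
- exact: plebanski1_not_variational.
- exact: plebanski2_not_variational.
- exact: grant_not_variational.
- exact: husain_not_variational.
Qed.
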